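(* Let $C\ge 0$. If there is a $C$-competitive mixed online algorithm for an online problem $(\mathcal X,\mathcal R,d)$, then there is a $C$-competitive online algorithm for this problem in each of the three standard models of randomized online algorithms: distributions over deterministic online algorithms, behavioral online algorithms, and distributional online algorithms.
   Context: Online problem: a set $\mathcal X$ of states (configurations), a set $\mathcal R$ of requests, a start state $s^0\in\mathcal X$, a function $d:\mathcal X\times\mathcal X\to[0,\infty)$ with $d(x,x)=0$ and $d(x,z)\le d(x,y)+d(y,z)$, and a cost function $\mathrm{cost}:\mathcal X\times\mathcal R\times\mathcal X\to[0,\infty)$ satisfying $\mathrm{cost}(u,r,v)\le d(u,x)+\mathrm{cost}(x,r,y)+d(y,v)$. For a request sequence $\varrho=r^1\dots r^n$, $\mathrm{cost}_{\mathrm{opt}}(\varrho)$ is the infimum of $\sum_{t=1}^n\mathrm{cost}(x^{t-1},r^t,x^t)$ over all $x^1,\dots,x^n\in\mathcal X$ with $x^0=s^0$. A (randomized) online algorithm $\mathcal A$ is $C$-competitive if there is a constant $K$ such that $E(\mathrm{cost}_{\mathcal A}(\varrho))\le C\cdot\mathrm{cost}_{\mathrm{opt}}(\varrho)+K$ for every finite request sequence $\varrho$. $\Pi$ is the set of finitely supported probability distributions on $\mathcal X$; for $\pi,\pi'\in\Pi$, $\mathrm{cost}(\pi,r,\pi')$ is the minimum of $\sum_{x,y}\gamma(x,y)\mathrm{cost}(x,r,y)$ over probability distributions $\gamma$ on $\mathrm{supp}(\pi)\times\mathrm{supp}(\pi')$ with marginals $\pi,\pi'$. Mixed online algorithm: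 memory states $\mathcal M$, start memory $m^0$; for each full state $k=(\pi,m)\in\Pi\times\mathcal M$ and request $r$, finitely many subsequent full states $k_i=(\pi_i,m_i)$ with weights $\lambda_i>0$ summing to $1$; from $k^0=(s^0,m^0)$, on request $r^t$ it moves to $k^t=k_i$ with probability $\lambda_i$; step cost $\mathrm{cost}(\pi,r,\sum_i\lambda_i\pi_i)$, total cost the sum of step costs. Deterministic online algorithm: chooses $x^t$ as a function of $r^1,\dots,r^t$, cost $\sum_t \mathrm{cost}(x^{t-1},r^t,x^t)$; a distribution over them is a random variable with such values. Behavioral algorithm: from full state $(x^{t-1},m^{t-1})\in\mathcal X\times\mathcal M$ and $r^t$ draws $(x^t,m^t)$ from a finitely supported distribution depending only on $(x^{t-1},m^{t-1},r^t)$, cost $\sum_t\mathrm{cost}(x^{t-1},r^t,x^t)$. Distributional algorithm: deterministic map $(\pi^{t-1},m^{t-1},r^t)\mapsto(\pi^t,m^t)$ on $\Pi\times\mathcal M\times\mathcal R$, cost $\sum_t\mathrm{cost}(\pi^{t-1},r^t,\pi^t)$. *)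

From HB Require Import structures.
From mathcomp Require Import all_boot all_order all_algebra.
From mathcomp Require Import all_classical all_reals all_analysis.
Set Implicit Arguments.
Unset Strict Implicit.
Unset Printing Implicit Defensive.
Import Order.TTheory GRing.Theory Num.Theory.
Local Open Scope classical_set_scope.
Local Open Scope ring_scope.

Section OnlineProblem.
Variables (R : realType) (X Rq : Type).

Definition online_problem (d : X -> X -> R) (cost : X -> Rq -> X -> R) : Prop :=
  [/\ (forall x y, 0 <= d x y),
      (forall x, d x x = 0),
      (forall x y z, d x z <= d x y + d y z),
      (forall u r v, 0 <= cost u r v) &
      (forall u x r y v, cost u r v <= d u x + cost x r y + d y v)].

Definition supp (p : X -> R) : set {classic X} := [set x | p x != 0].

Definition is_dist (p : X -> R) : Prop :=
  [/\ (forall x, 0 <= p x), finite_set (supp p) &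
      \sum_(x \in supp p) p x = 1].

Record Pi := MkPi { pmf :> X -> R; pmfP : is_dist pmf }.

Definition dirac (s : X) : X -> R := fun x => if `[< x = s >] then 1 else 0.

Lemma dirac_is_dist (s : X) : is_dist (dirac s).
Proof.
have Hs : supp (dirac s) = [set s].
  rewrite /supp /dirac; apply/seteqP; split => x /=.
    by case: asboolP => // _; rewrite eqxx.
  by move->; case: asboolP => //= _; rewrite oner_neq0.
split.
- by move=> x; rewrite /dirac; case: asboolP.
- by rewrite Hs; exact: finite_set1.
- by rewrite Hs fsbig_set1 /dirac; case: asboolP.
Qed.

Definition dirac_pi (s : X) : Pi := MkPi (dirac_is_dist s).

Definition coupling (p q : X -> R) (g : X -> X -> R) : Prop :=
  [/\ (forall x y, 0 <= g x y),
      (forall x y, g x y != 0 -> p x != 0 /\ q y != 0),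
      (forall x, \sum_(y \in supp q) g x y = p x) &
      (forall y, \sum_(x \in supp p) g x y = q y)].

Variable cost : X -> Rq -> X -> R.

Definition coupling_cost (p q : X -> R) (r : Rq) (g : X -> X -> R) : R :=
  \sum_(x \in supp p) \sum_(y \in supp q) g x y * cost x r y.

(** cost(pi, r, pi') : minimum (= infimum) over couplings. *)
Definition dcost (p q : X -> R) (r : Rq) : R :=
  inf [set coupling_cost p q r g | g in [set g | coupling p q g]].

Fixpoint path_cost (x : X) (rho : seq Rq) (xs : seq X) : R :=
  match rho, xs with
  | r :: rho', y :: xs' => cost x r y + path_cost y rho' xs'
  | _, _ => 0
  end.

Definition cost_opt (s0 : X) (rho : seq Rq) : R :=
  inf [set path_cost s0 rho xs | xs in [set xs : seq X | size xs = size rho]].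

Definition competitive (s0 : X) (C : R) (E : seq Rq -> R) : Prop :=
  exists K : R, forall rho, E rho <= C * cost_opt s0 rho + K.

Definition valid_weights (T : Type) (s : seq (R * T)) : Prop :=
  all (fun p => 0 < p.1) s /\ \sum_(p <- s) p.1 = 1.

Definition mixture (M : Type) (s : seq (R * (Pi * M))) : X -> R :=
  fun x => \sum_(p <- s) p.1 * pmf p.2.1 x.

Fixpoint mixed_cost (M : Type) (step : Pi * M -> Rq -> seq (R * (Pi * M)))
    (k : Pi * M) (rho : seq Rq) : R :=
  match rho with
  | [::] => 0
  | r :: rho' =>
      dcost (pmf k.1) (mixture (step k r)) r
      + \sum_(p <- step k r) p.1 * mixed_cost step p.2 rho'
  end.

Definition mixed_competitive (s0 : X) (C : R) : Prop :=
  exists (M : Type) (m0 : M) (step : Pi * M -> Rq -> seq (R * (Pi * M))),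
    (forall k r, valid_weights (step k r)) /\
    competitive s0 C (mixed_cost step (dirac_pi s0, m0)).

Definition det_alg := seq Rq -> X.

Fixpoint det_cost_from (A : det_alg) (hist : seq Rq) (x : X) (rho : seq Rq) : R :=
  match rho with
  | [::] => 0
  | r :: rho' =>
      let h := rcons hist r in cost x r (A h) + det_cost_from A h (A h) rho'
  end.

Definition det_cost (s0 : X) (A : det_alg) (rho : seq Rq) : R :=
  det_cost_from A [::] s0 rho.

Definition randdet_competitive (s0 : X) (C : R) : Prop :=
  exists (dm : measure_display) (Om : measurableType dm)
         (P : probability Om R) (A : Om -> det_alg),
    (forall rho, measurable_fun setT (fun w => det_cost s0 (A w) rho)) /\
    exists K : R, forall rho,
      (\int[P]_w (det_cost s0 (A w) rho)%:E <= (C * cost_opt s0 rho + K)%:E)%E.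

Fixpoint beh_cost (M : Type) (step : X * M -> Rq -> seq (R * (X * M)))
    (k : X * M) (rho : seq Rq) : R :=
  match rho with
  | [::] => 0
  | r :: rho' =>
      \sum_(p <- step k r) p.1 * (cost k.1 r p.2.1 + beh_cost step p.2 rho')
  end.

Definition behavioral_competitive (s0 : X) (C : R) : Prop :=
  exists (M : Type) (m0 : M) (step : X * M -> Rq -> seq (R * (X * M))),
    (forall k r, valid_weights (step k r)) /\
    competitive s0 C (beh_cost step (s0, m0)).

Fixpoint distr_cost (M : Type) (F : Pi * M -> Rq -> Pi * M)
    (k : Pi * M) (rho : seq Rq) : R :=
  match rho with
  | [::] => 0
  | r :: rho' => let k' := F k r in dcost (pmf k.1) (pmf k'.1) r + distr_cost F k' rho'
  end.

Definition distributional_competitive (s0 : X) (C : R) : Prop :=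
  exists (M : Type) (m0 : M) (F : Pi * M -> Rq -> Pi * M),
    competitive s0 C (distr_cost F (dirac_pi s0, m0)).

End OnlineProblem.

(* Mixed to behavioral: at step [t], in full state [(x, k)] with [x] in the support of
   the distribution [pi] of [k], fix a coupling [gamma] of [pi] and the mixture
   [mu = sum_i lambda_i pi_i] of the successors that is optimal up to [2^-(t+1)]; move
   to [y] with probability [gamma x y / pi x], then to memory [k_i] with probability
   [lambda_i pi_i y / mu y].  Given the new memory [k_i], the new position is
   distributed as [pi_i], so by induction the expected cost exceeds the mixed cost
   by at most [sum_t 2^-(t+1) <= 1].
   Behavioral to distributional: remember the whole finite distribution over full
   states and play its marginal on positions; the joint law of consecutive positions
   is a coupling whose cost is the expected behavioral step cost.
   Behavioral to deterministic: one uniform [u] in [[0, 1[] resolves all random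
   choices, each step cutting the current subinterval in proportion to the weights;
   integrating over [u] yields the expected behavioral cost. *)

From Pilot Require Import Defs.
From HB Require Import structures.
From mathcomp Require Import all_boot all_order all_algebra finmap.
From mathcomp Require Import all_classical all_reals all_analysis.
From mathcomp Require Import measurable_realfun ring lra.
Import Order.TTheory GRing.Theory Num.Theory.
Local Open Scope classical_set_scope.
Local Open Scope ring_scope.
Set Implicit Arguments.
Unset Strict Implicit.
Unset Printing Implicit Defensive.

Section SeqIn.
Variables (R : realType) (T : Type).
Implicit Types (s : seq T) (F G : T -> R).

Lemma allP_In (P : pred T) s : all P s <-> forall i, List.In i s -> P i.
Proof.
elim: s => [|a s IH] //=; split.
  by move=> /andP[Pa /IH Ps] i [<-|/Ps].
by move=> H; rewrite H /=; [apply/IH => i hi; apply: H; right | left].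
Qed.

Lemma In_allpairs (U V : Type) (h : T -> V -> U) s (t : T -> seq V) z :
  List.In z [seq h x y | x <- s, y <- t x] ->
  exists x y, [/\ List.In x s, List.In y (t x) & z = h x y].
Proof.
elim: s => [|a s IH] //= /List.in_app_iff[/List.in_map_iff[y [<- hy]]|].
  by exists a, y; split => //; left.
by case/IH => x [y [hx hy ->]]; exists x, y; split => //; right.
Qed.

Lemma eq_bigr_In s F G : (forall i, List.In i s -> F i = G i) ->
  \sum_(i <- s) F i = \sum_(i <- s) G i.
Proof.
elim: s => [|a s IH] H; first by rewrite !big_nil.
rewrite !big_cons H; last by left.
by rewrite IH // => i hi; apply: H; right.
Qed.

Lemma ler_sum_In s F G : (forall i, List.In i s -> F i <= G i) ->
  \sum_(i <- s) F i <= \sum_(i <- s) G i.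
Proof.
elim: s => [|a s IH] H; first by rewrite !big_nil.
rewrite !big_cons lerD //; first by apply: H; left.
by apply: IH => i hi; apply: H; right.
Qed.

Lemma sumr_ge0_In s F : (forall i, List.In i s -> 0 <= F i) ->
  0 <= \sum_(i <- s) F i.
Proof. by move=> F0; have := @ler_sum_In s (fun=> 0) F F0; rewrite big1. Qed.

Lemma ler_term_sum_In s F i : (forall j, List.In j s -> 0 <= F j) ->
  List.In i s -> F i <= \sum_(j <- s) F j.
Proof.
elim: s => [|a s IH] F0 //= [<-|hi]; rewrite big_cons.
  by rewrite lerDl sumr_ge0_In // => j hj; apply: F0; right.
have F0s j : List.In j s -> 0 <= F j by move=> hj; apply: F0; right.
by rewrite (le_trans (IH F0s hi)) // lerDr; apply: F0; left.
Qed.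

Lemma sumr_neq0_In s F : \sum_(i <- s) F i != 0 ->
  exists i, List.In i s /\ F i != 0.
Proof.
elim: s => [|a s IH]; first by rewrite big_nil eqxx.
rewrite big_cons; have [->|Fa _] := eqVneq (F a) 0; last by exists a; split; [left|].
by rewrite add0r => /IH[i [hi Fi]]; exists i; split; [right|].
Qed.

Lemma psumr_eq0_In s F i : (forall j, List.In j s -> 0 <= F j) ->
  \sum_(j <- s) F j = 0 -> List.In i s -> F i = 0.
Proof.
move=> F0 s0 hi; apply/eqP; rewrite eq_le (F0 _ hi) andbT -s0.
exact: ler_term_sum_In.
Qed.

End SeqIn.

Lemma In_mem (T : eqType) (s : seq T) y : List.In y s -> y \in s.
Proof. by elim: s => [|a s IH] //= [->|/IH]; rewrite in_cons ?eqxx // => ->; rewrite orbT. Qed.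

Section PushForward.
Variables (R : realType) (X : Type).

Lemma fsbig_uniq_seq (D : set {classic X}) (s : seq {classic X}) (f : X -> R) :
  uniq s -> D `<=` [set` s] -> (forall x, x \in s -> ~ D x -> f x = 0) ->
  \sum_(x \in D) f x = \sum_(x <- s) f x.
Proof.
move=> us Ds f0; rewrite (fsbig_seq _ _ us).
by apply: fsbig_widen => // x [sx nDx]; exact: f0.
Qed.

Lemma fsbig_supp_mulr (p h : X -> R) (s : seq {classic X}) : uniq s ->
  (forall x, p x != 0 -> (x : {classic X}) \in s) ->
  \sum_(x \in supp p) p x * h x = \sum_(x <- s) p x * h x.
Proof.
move=> us cov; apply: fsbig_uniq_seq => // x _ /= px.
have /eqP -> : p x == 0 by apply/negPn/negP => /px.
by rewrite mul0r.
Qed.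

Definition push (T : Type) (l : seq T) (f : T -> X) (w : T -> R) : X -> R :=
  fun x => \sum_(t <- l) (if `[< x = f t >] then w t else 0).

Variables (T : Type) (l : seq T) (f : T -> X).
Local Notation fX := (fun t => f t : {classic X}).

Lemma push_ge0 (w : T -> R) x : (forall t, List.In t l -> 0 <= w t) ->
  0 <= push l f w x.
Proof. by move=> w0; apply: sumr_ge0_In => t tl; case: asboolP => // _; apply: w0. Qed.

Lemma push_neq0_mem (w : T -> R) x : push l f w x != 0 ->
  (x : {classic X}) \in map fX l.
Proof.
case/sumr_neq0_In => t [tl]; case: asboolP => [-> _|_]; last by rewrite eqxx.
exact/In_mem/(List.in_map fX).
Qed.

Lemma push_eq0_mono (w w' : T -> R) x :
  (forall t, List.In t l -> 0 <= w t) ->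
  (forall t, List.In t l -> w t = 0 -> w' t = 0) ->
  push l f w x = 0 -> push l f w' x = 0.
Proof.
move=> w0 ww' pw0; rewrite /push (eq_bigr_In (G := fun=> 0)) ?big1 //.
move=> t tl; case: asboolP => // xt; apply: ww' => //.
have := psumr_eq0_In _ pw0 tl; rewrite asboolT //; apply => j jl.
by case: asboolP => // _; exact: w0.
Qed.

Lemma ler_weight_push (w : T -> R) t : (forall t, List.In t l -> 0 <= w t) ->
  List.In t l -> w t <= push l f w (f t).
Proof.
move=> w0 tl.
have := @ler_term_sum_In _ _ l (fun t' => if `[< f t = f t' >] then w t' else 0) _ _ tl.
by rewrite asboolT //; apply => j jl; case: asboolP => // _; exact: w0.
Qed.

Lemma sum_push (w : T -> R) (h : X -> R) (U : seq {classic X}) : uniq U ->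
  (forall t, List.In t l -> fX t \in U) ->
  \sum_(x <- U) push l f w x * h x = \sum_(t <- l) w t * h (f t).
Proof.
move=> uU cov; rewrite /push.
under eq_bigr do rewrite big_distrl.
rewrite exchange_big /=; apply: eq_bigr_In => t /cov tU.
rewrite (bigD1_seq (fX t)) //= asboolT // big1 ?addr0 // => x xt.
by case: asboolP => [xft|_]; [rewrite xft eqxx in xt | rewrite mul0r].
Qed.

Lemma fsbig_push (w w' : T -> R) (h : X -> R) :
  (forall x, push l f w x = 0 -> push l f w' x = 0) ->
  \sum_(x \in supp (push l f w)) push l f w' x * h x = \sum_(t <- l) w' t * h (f t).
Proof.
move=> ww'; rewrite (@fsbig_uniq_seq _ (undup (map fX l))) ?undup_uniq //.
- apply: sum_push; first exact: undup_uniq.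
  by move=> t tl; rewrite mem_undup; exact/In_mem/(List.in_map fX).
- by move=> x /push_neq0_mem; rewrite /= mem_undup.
- move=> x _ /= px; have /eqP/ww' -> : push l f w x == 0.
    by apply/negPn/negP => /px.
  by rewrite mul0r.
Qed.

End PushForward.

Section Couplings.
Variables (R : realType) (X Rq : Type) (cost : X -> Rq -> X -> R).
Hypothesis cost_ge0 : forall u r v, 0 <= cost u r v.

Lemma coupling_cost_ge0 p q r g : coupling p q g -> 0 <= coupling_cost cost p q r g.
Proof.
case=> g0 _ _ _; apply: fsumr_ge0 => x _; apply: fsumr_ge0 => y _.
by rewrite mulr_ge0.
Qed.

Lemma dcost_le p q r g : coupling p q g -> dcost cost p q r <= coupling_cost cost p q r g.
Proof.
move=> pqg; apply: ge_inf; last by exists g.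
by exists 0 => _ [g' pqg' <-]; exact: coupling_cost_ge0.
Qed.

Lemma near_optimal_coupling p q r (e : R) : 0 < e -> (exists g, coupling p q g) ->
  exists g, coupling p q g /\ coupling_cost cost p q r g <= dcost cost p q r + e.
Proof.
move=> e0 [g pqg].
have hinf : has_inf [set coupling_cost cost p q r g | g in [set g | coupling p q g]].
  split; first by exists (coupling_cost cost p q r g), g.
  by exists 0 => _ [g' pqg' <-]; exact: coupling_cost_ge0.
have [_ [g' pqg' <-] lt] := inf_adherent e0 hinf.
by exists g'; split => //; exact: ltW.
Qed.

End Couplings.

Lemma product_coupling (R : realType) (X : Type) (p q : X -> R) :
  is_dist p -> is_dist q -> exists g, coupling p q g.
Proof.
move=> [p0 pf p1] [q0 qf q1]; exists (fun x y => p x * q y); split.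
- by move=> x y; rewrite mulr_ge0.
- by move=> x y; rewrite mulf_eq0 negb_or => /andP[].
- by move=> x; rewrite -fsbig_distrr // /= q1 mulr1.
- move=> y; under eq_fsbigr do rewrite mulrC.
  by rewrite -fsbig_distrr // /= p1 mulr1.
Qed.

Section Weights.
Variables (R : realType) (T : Type).

Lemma weight_gt0 (s : seq (R * T)) q : valid_weights s -> List.In q s -> 0 < q.1.
Proof. by case=> /allP_In s0 _; exact: s0. Qed.

Lemma sum_filter_weights_gt0 (s : seq (R * T)) (F : R * T -> R) :
  (forall q, List.In q s -> 0 <= q.1) ->
  \sum_(q <- [seq q <- s | 0 < q.1]) q.1 * F q = \sum_(q <- s) q.1 * F q.
Proof.
move=> s0; rewrite big_filter big_mkcond /=; apply: eq_bigr_In => q qs.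
case: ifPn => // /negP q0; suff -> : q.1 = 0 by rewrite mul0r.
by apply/eqP; rewrite eq_le s0 // andbT leNgt; exact/negP.
Qed.

End Weights.

Section Mixture.
Variables (R : realType) (X : Type).

Lemma Pi_ge0 (p : Pi R X) x : 0 <= p x.
Proof. by case: p => f []. Qed.

Lemma Pi_finite_supp (p : Pi R X) : finite_set (supp p).
Proof. by case: p => f []. Qed.

Lemma Pi_sum1 (p : Pi R X) : \sum_(x \in supp p) p x = 1.
Proof. by case: p => f []. Qed.

Definition supp_seq (p : X -> R) : seq {classic X} := fset_set (supp p).

Lemma supp_seq_uniq (p : X -> R) : uniq (supp_seq p).
Proof. exact: fset_uniq. Qed.

Lemma mem_supp_seq (p : X -> R) x : finite_set (supp p) ->
  ((x : {classic X}) \in supp_seq p) = (p x != 0).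
Proof. by move=> fp; rewrite /supp_seq in_fset_set //; apply/idP/idP => [/set_mem|/mem_set]. Qed.

Lemma fsbig_supp_seq (p F : X -> R) :
  finite_set (supp p) -> \sum_(x \in supp p) F x = \sum_(x <- supp_seq p) F x.
Proof. exact: fsbig_finite. Qed.

Variable M : Type.
Implicit Types s : seq (R * (Pi R X * M)).

Lemma mixture_ge0 s x : valid_weights s -> 0 <= mixture s x.
Proof.
move=> sw; apply: sumr_ge0_In => q qs.
by rewrite mulr_ge0 ?Pi_ge0 // ltW // (weight_gt0 sw qs).
Qed.

Lemma mixture_neq0 s q x : valid_weights s -> List.In q s -> q.2.1 x != 0 ->
  mixture s x != 0.
Proof.
move=> sw qs qx; rewrite gt_eqF // (@lt_le_trans _ _ (q.1 * q.2.1 x)) //.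
  by rewrite mulr_gt0 ?(weight_gt0 sw qs) // lt_neqAle eq_sym qx Pi_ge0.
rewrite /mixture (ler_term_sum_In (F := fun q : R * (Pi R X * M) => q.1 * q.2.1 x)) // => j js.
by rewrite mulr_ge0 ?Pi_ge0 // ltW // (weight_gt0 sw js).
Qed.

Lemma supp_cover s : exists U : seq {classic X},
  uniq U /\ forall q x, List.In q s -> q.2.1 x != 0 -> (x : {classic X}) \in U.
Proof.
elim: s => [|a s [U [uU cov]]]; first by exists [::].
exists (undup (supp_seq a.2.1 ++ U)); split; first exact: undup_uniq.
move=> q x /= [<- qx|qs qx]; rewrite mem_undup mem_cat.
  by rewrite mem_supp_seq ?qx //; exact: Pi_finite_supp.
by rewrite (cov q) ?orbT.
Qed.

Lemma mixture_is_dist s : valid_weights s -> is_dist (mixture s).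
Proof.
move=> sw; have [U [uU cov]] := supp_cover s.
have suppU : supp (mixture s) `<=` [set` U].
  move=> x /= /sumr_neq0_In[q [qs]]; rewrite mulf_eq0 negb_or => /andP[_].
  exact: cov.
split; first by move=> x; exact: mixture_ge0.
  exact: sub_finite_set suppU (finite_seq _).
rewrite (fsbig_uniq_seq uU suppU); last first.
  by move=> x _ /= sx; apply/eqP/negPn/negP => /sx.
rewrite /mixture exchange_big /=; case: (sw) => _ <-.
apply: eq_bigr_In => q qs; rewrite -big_distrr /= -[RHS]mulr1 -(Pi_sum1 q.2.1).
congr (_ * _); under eq_fsbigr do rewrite -[_ q.2.1 _]mulr1.
by rewrite (fsbig_supp_mulr _ uU (cov q ^~ qs)); apply: eq_bigr => x _; rewrite mulr1.
Qed.

End Mixture.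

Section MixedToBehavioral.
Variables (R : realType) (X Rq : Type) (cost : X -> Rq -> X -> R).
Variables (M : Type) (stepM : Pi R X * M -> Rq -> seq (R * (Pi R X * M))).
Hypothesis stepM_weights : forall k r, valid_weights (stepM k r).

Implicit Types (k : Pi R X * M) (r : Rq) (t : nat) (x y : X) (q : R * (Pi R X * M)).
Local Notation mu k r := (mixture (stepM k r)).

Lemma mu_finite_supp k r : finite_set (supp (mu k r)).
Proof. by case: (mixture_is_dist (stepM_weights k r)). Qed.

Definition budget (t : nat) : R := (2 ^+ t)^-1.

Lemma budget_gt0 t : 0 < budget t.
Proof. by rewrite /budget invr_gt0 exprn_gt0. Qed.

Lemma budgetS t : budget t.+1 + budget t.+1 = budget t.
Proof.
have two_neq0 : (2 : R) != 0 by rewrite pnatr_eq0.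
by rewrite /budget exprS; field; rewrite expf_neq0.
Qed.

Variable gamma : Pi R X * M -> Rq -> nat -> X -> X -> R.
Hypothesis gamma_coupling : forall k r t, coupling k.1 (mu k r) (gamma k r t).
Hypothesis gamma_near_opt : forall k r t,
  coupling_cost cost k.1 (mu k r) r (gamma k r t) <= dcost cost k.1 (mu k r) r + budget t.+1.

Definition posterior k r y q : R := q.1 * q.2.1 y / mu k r y.

Definition move_weight k r t x y q : R := gamma k r t x y / k.1 x * posterior k r y q.

(* The second branch is never taken from the start state: the position stays in
   the support of [k.1]. *)
Definition beh_step (st : X * ((Pi R X * M) * nat)) (r : Rq) :
    seq (R * (X * ((Pi R X * M) * nat))) :=
  let: (x, (k, t)) := st in
  if k.1 x != 0 then
    [seq q <- [seq (move_weight k r t x y q, (y, (q.2, t.+1)))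
                | y <- supp_seq (mu k r), q <- stepM k r] | 0 < q.1]
  else [:: (1, (x, (k, t.+1)))].

Lemma posterior_sum k r y : mu k r y != 0 -> \sum_(q <- stepM k r) posterior k r y q = 1.
Proof. by move=> muy; rewrite /posterior -big_distrl /= mulfV. Qed.

Lemma move_weight_ge0 k r t x y q : List.In q (stepM k r) -> 0 <= move_weight k r t x y q.
Proof.
move=> qs; have [g0 _ _ _] := gamma_coupling k r t.
rewrite /move_weight /posterior !mulr_ge0 ?divr_ge0 ?invr_ge0 ?Pi_ge0 ?mixture_ge0 //.
exact/ltW/(weight_gt0 (stepM_weights k r) qs).
Qed.

Lemma beh_step_weights st r : valid_weights (beh_step st r).
Proof.
case: st => x [k t] /=; case: ifPn => kx; last by split; rewrite ?big_seq1 //= ltr01.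
split; first exact: filter_all.
under eq_bigr do rewrite -[_.1]mulr1.
rewrite sum_filter_weights_gt0; last first.
  move=> z zs; have [y [q [_ qs ->]]] := In_allpairs zs; exact: move_weight_ge0.
rewrite big_allpairs_dep /=.
rewrite (eq_big_seq (fun y : {classic X} => gamma k r t x y / k.1 x)); last first.
  move=> y; rewrite (mem_supp_seq _ (mu_finite_supp k r)) => muy.
  by under eq_bigr do rewrite mulr1; rewrite -big_distrr /= posterior_sum ?mulr1.
have [_ _ gamma_row _] := gamma_coupling k r t.
by rewrite -big_distrl /= -fsbig_supp_seq ?gamma_row ?mulfV //; exact: mu_finite_supp.
Qed.

Lemma beh_cost_cons x k t r rho : k.1 x != 0 ->
  k.1 x * beh_cost cost beh_step (x, (k, t)) (r :: rho) =
  \sum_(y <- supp_seq (mu k r)) \sum_(q <- stepM k r) gamma k r t x y * posterior k r y q *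
     (cost x r y + beh_cost cost beh_step (y, (q.2, t.+1)) rho).
Proof.
move=> kx; rewrite /= kx sum_filter_weights_gt0; last first.
  move=> z zs; have [y [q [_ qs ->]]] := In_allpairs zs; exact: move_weight_ge0.
rewrite big_allpairs_dep big_distrr /=; apply: eq_bigr => y _.
rewrite big_distrr /=; apply: eq_bigr => q _.
by rewrite /move_weight; field.
Qed.

Definition expected_cost k t rho : R :=
  \sum_(x \in supp k.1) k.1 x * beh_cost cost beh_step (x, (k, t)) rho.

Lemma expected_cost_cons k t r rho :
  expected_cost k t (r :: rho) = coupling_cost cost k.1 (mu k r) r (gamma k r t)
    + \sum_(q <- stepM k r) q.1 * expected_cost q.2 t.+1 rho.
Proof.
have [_ _ _ gamma_col] := gamma_coupling k r t.
have fin_mu := mu_finite_supp k r.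
have mem_U (y : {classic X}) : (y \in supp_seq (mu k r)) = (mu k r y != 0).
  exact: mem_supp_seq.
pose g := gamma k r t; pose z := posterior k r.
pose b y q := beh_cost cost beh_step (y, (q.2, t.+1)) rho.
rewrite /expected_cost (fsbig_supp_seq _ (Pi_finite_supp _)).
rewrite (eq_big_seq (fun x : {classic X} => \sum_(y <- supp_seq (mu k r)) \sum_(q <- stepM k r)
    (g x y * z y q * cost x r y + g x y * z y q * b y q))); last first.
  move=> x; rewrite (mem_supp_seq _ (Pi_finite_supp _)) => kx.
  by rewrite beh_cost_cons //; apply: eq_bigr => y _; apply: eq_bigr => q _; rewrite mulrDr.
under eq_bigr do (under eq_bigr do rewrite big_split /=; rewrite big_split /=).
rewrite big_split /=; congr (_ + _).
  rewrite /coupling_cost (fsbig_supp_seq _ (Pi_finite_supp _)); apply: eq_bigr => x _.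
  rewrite fsbig_supp_seq //; apply: eq_big_seq => y; rewrite mem_U => muy.
  by rewrite -big_distrl -big_distrr /= posterior_sum ?mulr1.
rewrite exchange_big /= (eq_big_seq (fun y : {classic X} =>
    \sum_(q <- stepM k r) q.1 * (q.2.1 y * b y q))); last first.
  move=> y; rewrite mem_U => muy; rewrite exchange_big /=; apply: eq_bigr => q _.
  rewrite -!big_distrl /= -(fsbig_supp_seq _ (Pi_finite_supp _)) gamma_col /z /posterior.
  by field.
rewrite exchange_big /=; apply: eq_bigr_In => q qs; rewrite -big_distrr /=.
rewrite /expected_cost (fsbig_supp_mulr _ (supp_seq_uniq (mu k r))) // => y qy.
by rewrite mem_U (mixture_neq0 (stepM_weights k r) qs).
Qed.

Lemma expected_cost_le rho k t :
  expected_cost k t rho <= mixed_cost cost stepM k rho + budget t.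
Proof.
elim: rho k t => [|r rho IH] k t.
  rewrite /expected_cost /= add0r; under eq_fsbigr do rewrite mulr0.
  by rewrite fsbig1 // ltW ?budget_gt0.
rewrite expected_cost_cons /= -budgetS.
have le_cc := gamma_near_opt k r t.
have le_sum : \sum_(q <- stepM k r) q.1 * expected_cost q.2 t.+1 rho <=
    \sum_(q <- stepM k r) q.1 * mixed_cost cost stepM q.2 rho + budget t.+1.
  case: (stepM_weights k r) => _ w1.
  rewrite -[budget _]mul1r -w1 big_distrl -big_split /=.
  apply: ler_sum_In => q qs; rewrite -mulrDr ler_wpM2l ?IH //.
  exact/ltW/(weight_gt0 (stepM_weights k r) qs).
move: le_cc le_sum; lra.
Qed.

End MixedToBehavioral.

Lemma supp_dirac (R : realType) (X : Type) (s : X) :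
  supp (dirac_pi R s) = [set (s : {classic X})].
Proof.
rewrite /supp /= /Defs.dirac; apply/seteqP; split => x /=.
  by case: asboolP => // _; rewrite eqxx.
by move->; case: asboolP => //= _; rewrite oner_neq0.
Qed.

Lemma mixed_to_behavioral (R : realType) (X Rq : Type) (cost : X -> Rq -> X -> R)
    (s0 : X) (C : R) :
  (forall u r v, 0 <= cost u r v) ->
  mixed_competitive cost s0 C -> behavioral_competitive cost s0 C.
Proof.
move=> cost_ge0 [M [m0 [stepM [stepM_weights [K HK]]]]].
have near_opt (k : Pi R X * M) r t : exists g,
    coupling k.1 (mixture (stepM k r)) g /\ coupling_cost cost k.1 (mixture (stepM k r)) r g
      <= dcost cost k.1 (mixture (stepM k r)) r + budget R t.+1.
  apply: (near_optimal_coupling cost_ge0); first exact: budget_gt0.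
  by apply: product_coupling; [case: k.1 | exact: mixture_is_dist].
pose gamma k r t := proj1_sig (cid (near_opt k r t)).
have gamma_coupling k r t := (proj2_sig (cid (near_opt k r t))).1.
have gamma_near_opt k r t := (proj2_sig (cid (near_opt k r t))).2.
exists ((Pi R X * M) * nat)%type, ((dirac_pi R s0, m0), 0%N), (beh_step stepM gamma).
split; first exact: (@beh_step_weights R X Rq M stepM stepM_weights gamma gamma_coupling).
exists (K + 1) => rho.
have := expected_cost_le stepM_weights gamma_coupling gamma_near_opt rho (dirac_pi R s0, m0) 0.
rewrite /expected_cost supp_dirac fsbig_set1 /= /Defs.dirac asboolT // mul1r.
rewrite /budget expr0 invr1 => le_cost.
by rewrite (le_trans le_cost) // addrA lerD2r HK.
Qed.

Section BehavioralToDistributional.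
Variables (R : realType) (X Rq : Type) (cost : X -> Rq -> X -> R).
Hypothesis cost_ge0 : forall u r v, 0 <= cost u r v.
Variables (M : Type) (step : X * M -> Rq -> seq (R * (X * M))).
Hypothesis step_weights : forall k r, valid_weights (step k r).
Implicit Types (nu : seq (R * (X * M))) (r : Rq).

Definition marginal nu : X -> R := push nu (fun q => q.2.1) fst.

Lemma marginal_is_dist nu : valid_weights nu -> is_dist (marginal nu).
Proof.
move=> nuw; have w0 q : List.In q nu -> 0 <= q.1 by move=> qs; exact/ltW/(weight_gt0 nuw qs).
split; first by move=> x; exact: push_ge0.
  apply: sub_finite_set (finite_seq [seq q.2.1 : {classic X} | q <- nu]).
  by move=> x nux; exact: push_neq0_mem nux.
under eq_fsbigr do rewrite -[marginal _ _]mulr1.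
rewrite fsbig_push // -[RHS](proj2 nuw); apply: eq_bigr => q _; exact: mulr1.
Qed.

Definition evolve nu r : seq (R * (X * M)) :=
  [seq (q.1 * p.1, p.2) | q <- nu, p <- step q.2 r].

Lemma evolve_weights nu r : valid_weights nu -> valid_weights (evolve nu r).
Proof.
move=> nuw; split.
  apply/allP_In => e es; have [q [p [qs ps ->]]] := In_allpairs es.
  by rewrite mulr_gt0 ?(weight_gt0 nuw qs) ?(weight_gt0 (step_weights q.2 r) ps).
rewrite big_allpairs_dep /= -[RHS](proj2 nuw); apply: eq_bigr => q _.
by rewrite -big_distrr /= (proj2 (step_weights q.2 r)) mulr1.
Qed.

Definition transitions nu r : seq (X * (R * (X * M))) :=
  [seq (q.2.1, (q.1 * p.1, p.2)) | q <- nu, p <- step q.2 r].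

Definition transition_coupling nu r (x y : X) : R :=
  push (transitions nu r) (fun e => e.2.2.1)
    (fun e => if `[< x = e.1 >] then e.2.1 else 0) y.

Lemma transitions_weight_gt0 nu r e : valid_weights nu ->
  List.In e (transitions nu r) -> 0 < e.2.1.
Proof.
move=> nuw es; have [q [p [qs ps ->]]] := In_allpairs es.
by rewrite mulr_gt0 ?(weight_gt0 nuw qs) ?(weight_gt0 (step_weights q.2 r) ps).
Qed.

Lemma marginal_transitions nu r :
  marginal nu = push (transitions nu r) fst (fun e => e.2.1).
Proof.
apply/funext => x; rewrite /marginal /push big_allpairs_dep /=; apply: eq_bigr => q _.
case: asboolP => _; last by rewrite big1.
by rewrite -big_distrr /= (proj2 (step_weights q.2 r)) mulr1.
Qed.

Lemma marginal_evolve nu r :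
  marginal (evolve nu r) = push (transitions nu r) (fun e => e.2.2.1) (fun e => e.2.1).
Proof. by apply/funext => y; rewrite /marginal /push !big_allpairs_dep. Qed.

Lemma transition_coupling_swap nu r x y :
  transition_coupling nu r x y =
  push (transitions nu r) fst (fun e => if `[< y = e.2.2.1 >] then e.2.1 else 0) x.
Proof. by apply: eq_bigr => e _; do 2 case: asboolP. Qed.

Lemma transition_coupling_is_coupling nu r : valid_weights nu ->
  coupling (marginal nu) (marginal (evolve nu r)) (transition_coupling nu r).
Proof.
move=> nuw; have w0 e : List.In e (transitions nu r) -> 0 <= e.2.1.
  by move=> es; exact/ltW/(transitions_weight_gt0 nuw es).
rewrite marginal_evolve (marginal_transitions _ r); split.
- by move=> x y; apply: push_ge0 => e es; case: asboolP => // _; exact: w0.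
- move=> x y /sumr_neq0_In[e [es]].
  case: asboolP => [-> |_]; last by rewrite eqxx.
  case: asboolP => [-> _|_]; last by rewrite eqxx.
  by split; rewrite gt_eqF //; apply: (lt_le_trans (transitions_weight_gt0 nuw es));
    exact: (@ler_weight_push _ _ _ _ _ (fun e => e.2.1)).
- move=> x; under eq_fsbigr do rewrite -[transition_coupling _ _ _ _]mulr1.
  rewrite fsbig_push; first by apply: eq_bigr => e _; rewrite mulr1.
  by move=> y; apply: push_eq0_mono => // e _ ->; case: asboolP.
- move=> y; under eq_fsbigr do rewrite transition_coupling_swap -[push _ _ _ _]mulr1.
  rewrite fsbig_push; first by apply: eq_bigr => e _; rewrite mulr1.
  by move=> x; apply: push_eq0_mono => // e _ ->; case: asboolP.
Qed.

Lemma transition_coupling_cost nu r : valid_weights nu ->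
  coupling_cost cost (marginal nu) (marginal (evolve nu r)) r (transition_coupling nu r) =
  \sum_(e <- transitions nu r) e.2.1 * cost e.1 r e.2.2.1.
Proof.
move=> nuw; have w0 e : List.In e (transitions nu r) -> 0 <= e.2.1.
  by move=> es; exact/ltW/(transitions_weight_gt0 nuw es).
rewrite /coupling_cost marginal_evolve (marginal_transitions _ r).
under eq_fsbigr => x _.
  rewrite /transition_coupling fsbig_push; last first.
    by move=> y; apply: push_eq0_mono => // e _ ->; case: asboolP.
  rewrite -[\sum_(_ <- _) _]mulr1.
  have -> : \sum_(e <- transitions nu r) (if `[< x = e.1 >] then e.2.1 else 0) * cost x r e.2.2.1
      = push (transitions nu r) fst (fun e => e.2.1 * cost e.1 r e.2.2.1) x.
    by apply: eq_bigr => e _; case: asboolP => [->|_]; rewrite ?mul0r.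
  over.
rewrite fsbig_push; first by apply: eq_bigr => e _; rewrite mulr1.
by move=> x; apply: push_eq0_mono => // e _ ->; rewrite mul0r.
Qed.

Definition distr_step (k : Pi R X * {nu | valid_weights nu}) r :
    Pi R X * {nu | valid_weights nu} :=
  let nu' := exist _ (evolve (sval k.2) r) (evolve_weights r (svalP k.2)) in
  (MkPi (marginal_is_dist (svalP nu')), nu').

Lemma distr_cost_le rho (pi : Pi R X) (nu : {nu | valid_weights nu}) :
  pi = marginal (sval nu) :> (X -> R) ->
  distr_cost cost distr_step (pi, nu) rho <= \sum_(q <- sval nu) q.1 * beh_cost cost step q.2 rho.
Proof.
elim: rho pi nu => [|r rho IH] pi nu pi_nu /=.
  by rewrite big1 // => q _; rewrite mulr0.
have IH' := IH (distr_step (pi, nu) r).1 (distr_step (pi, nu) r).2 erefl.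
rewrite pi_nu (le_trans (lerD (dcost_le cost_ge0 r
  (transition_coupling_is_coupling r (svalP nu))) IH')) //.
rewrite (transition_coupling_cost r (svalP nu)) /transitions /evolve.
rewrite !big_allpairs_dep /= -big_split /= le_eqVlt; apply/orP; left; apply/eqP.
apply: eq_bigr => q _; rewrite big_distrr -big_split /=; apply: eq_bigr => p _.
by rewrite mulrA mulrDr.
Qed.

End BehavioralToDistributional.

Lemma behavioral_to_distributional (R : realType) (X Rq : Type)
    (cost : X -> Rq -> X -> R) (s0 : X) (C : R) :
  (forall u r v, 0 <= cost u r v) ->
  behavioral_competitive cost s0 C -> distributional_competitive cost s0 C.
Proof.
move=> cost_ge0 [M [m0 [step [step_weights [K HK]]]]].
have w0 : valid_weights [:: ((1 : R), (s0, m0))].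
  by split; rewrite ?big_seq1 //= andbT ltr01.
exists {nu | valid_weights nu}, (exist _ _ w0), (distr_step step_weights).
exists K => rho.
have pi_nu : dirac_pi R s0 = marginal (sval (exist _ _ w0)) :> (X -> R).
  by apply/funext => x; rewrite /marginal /push big_seq1.
by rewrite (le_trans (distr_cost_le cost_ge0 step_weights rho pi_nu)) //= big_seq1 mul1r HK.
Qed.

Section Intervals.
Variable R : realType.
Local Notation mu := (@lebesgue_measure R).

Lemma integral_cst_itv_co (a b c : R) : a <= b ->
  (\int[mu]_(x in `[a, b[) c%:E = (c * (b - a))%:E)%E.
Proof.
move=> ab; rewrite integral_cst //= lebesgue_measure_itv /= lte_fin.
case: ifPn => [_|]; first by rewrite -EFinB -EFinM.
rewrite -leNgt => ba; have -> : b = a by apply/eqP; rewrite eq_le ab ba.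
by rewrite subrr mulr0 mule0.
Qed.

Lemma setU_itv_co (a b c : R) : a <= b -> b <= c ->
  `[a, c[%classic = `[a, b[%classic `|` `[b, c[%classic :> set R.
Proof. by move=> ab bc; apply: itv_bndbnd_setU; rewrite bnd_simp. Qed.

Lemma disj_itv_co (a b c : R) : [disjoint `[a, b[%classic & `[b, c[%classic :> set R].
Proof.
rewrite /disj_set; apply/eqP; rewrite !set_itvE; apply/seteqP; split => x //=.
by move=> [/andP[_ xb] /andP[bx _]]; move: (lt_le_trans xb bx); rewrite ltxx.
Qed.

End Intervals.

Section BehavioralToRandomized.
Variables (R : realType) (X Rq : Type) (cost : X -> Rq -> X -> R).
Hypothesis cost_ge0 : forall u r v, 0 <= cost u r v.
Variables (M : Type) (step : X * M -> Rq -> seq (R * (X * M))).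
Hypothesis step_weights : forall k r, valid_weights (step k r).

Local Notation state := ((X * M) * (R * R))%type.
Local Notation mu := (@lebesgue_measure R).

(* A state [(k, (a, w))] is a full state [k] of the behavioral algorithm together
   with the interval [[a, a + w[] of values of [u] that lead to it.  The fallback
   [(k, (a, w))] of [select] is never used for [u] in that interval, since the
   weights sum to [1]. *)
Fixpoint select (k : X * M) (a w : R) (s : seq (R * (X * M))) (u : R) : state :=
  if s is q :: s' then
    if u < a + w * q.1 then (q.2, (a, w * q.1)) else select k (a + w * q.1) w s' u
  else (k, (a, w)).

Definition advance (st : state) (r : Rq) (u : R) : state :=
  select st.1 st.2.1 st.2.2 (step st.1 r) u.

Fixpoint run_cost (st : state) (rho : seq Rq) (u : R) : R :=
  if rho is r :: rho' then
    let st' := advance st r u in cost st.1.1 r st'.1.1 + run_cost st' rho' u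
  else 0.

Definition select_cost (k : X * M) (r : Rq) (rho : seq Rq) (w : R) s a u : R :=
  let st' := select k a w s u in cost k.1 r st'.1.1 + run_cost st' rho u.

Lemma run_cost_ge0 rho st u : 0 <= run_cost st rho u.
Proof. by elim: rho st => [|r rho IH] st //=; rewrite addr_ge0. Qed.

Lemma select_cost_cons k r rho w q s a u :
  select_cost k r rho w (q :: s) a u =
  if u < a + w * q.1 then cost k.1 r q.2.1 + run_cost (q.2, (a, w * q.1)) rho u
  else select_cost k r rho w s (a + w * q.1) u.
Proof. by rewrite /select_cost /=; case: ifP. Qed.

Lemma measurable_select_cost k r rho w :
  (forall st, measurable_fun [set: R] (run_cost st rho)) ->
  forall s a, measurable_fun [set: R] (select_cost k r rho w s a).
Proof.
move=> mrun; elim=> [|q s IHs] a.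
  rewrite /select_cost /=.
  by apply: measurable_realfun.measurable_funD; [exact: measurable_cst | exact: mrun].
rewrite (_ : select_cost _ _ _ _ _ _ = fun u => if u < a + w * q.1
    then cost k.1 r q.2.1 + run_cost (q.2, (a, w * q.1)) rho u
    else select_cost k r rho w s (a + w * q.1) u); last first.
  by apply: funext => u; rewrite select_cost_cons.
apply: measurable_fun_if => //.
- by apply: measurable_realfun.measurable_fun_ltr => //; exact: measurable_cst.
- apply: (measurable_funS measurableT (@subsetT _ _)).
  by apply: measurable_realfun.measurable_funD => //; exact: mrun.
- exact: (measurable_funS measurableT (@subsetT _ _) (IHs _)).
Qed.

Lemma measurable_run_cost rho st : measurable_fun [set: R] (run_cost st rho).
Proof.
elim: rho st => [|r rho IH] [k [a w]]; first exact: measurable_cst.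
exact: measurable_select_cost.
Qed.

Lemma integral_select_cost k r rho w : 0 <= w ->
  (forall k' a' w', 0 <= w' ->
    (\int[mu]_(u in `[a', (a' + w')%R[) (run_cost (k', (a', w')) rho u)%:E =
     (w' * beh_cost cost step k' rho)%:E)%E) ->
  forall s a, all (fun q => 0 < q.1) s ->
  (\int[mu]_(u in `[a, (a + w * \sum_(q <- s) q.1)%R[) (select_cost k r rho w s a u)%:E =
   (w * \sum_(q <- s) q.1 * (cost k.1 r q.2.1 + beh_cost cost step q.2 rho))%:E)%E.
Proof.
move=> w0 IH; elim=> [|q s IHs] a /=.
  by rewrite !big_nil mulr0 addr0 set_itvco0 integral_set0.
move=> /andP[q0 s0].
have wq0 : 0 <= w * q.1 by rewrite mulr_ge0 // ltW.
have ws0 : 0 <= w * \sum_(q <- s) q.1.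
  rewrite mulr_ge0 // sumr_ge0_In // => p ps.
  by move/allP_In: s0 => /(_ p ps)/ltW.
rewrite big_cons mulrDr addrA (@setU_itv_co _ _ (a + w * q.1)) ?lerDl //.
have mrun st (D : set R) : measurable_fun D (EFin \o run_cost st rho).
  apply: (measurable_funS measurableT (@subsetT _ _)).
  by apply/measurable_EFinP; exact: measurable_run_cost.
rewrite ge0_integral_setU //; first last.
- exact: disj_itv_co.
- by move=> x _; rewrite lee_fin addr_ge0 ?run_cost_ge0.
- apply/measurable_EFinP/(measurable_funS measurableT (@subsetT _ _)).
  by apply: measurable_select_cost => st; exact: measurable_run_cost.
under eq_integral => u.
  rewrite inE /= in_itv /= => /andP[_ ua]; rewrite select_cost_cons ua EFinD.
  over.
rewrite ge0_integralD //; try exact: mrun; try by move=> x _; rewrite lee_fin ?run_cost_ge0.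
rewrite integral_cst_itv_co ?lerDl // IH //.
under [X in (_ + X)%E]eq_integral => u.
  rewrite inE /= in_itv /= => /andP[au _]; rewrite select_cost_cons ltNge au /=.
  over.
by rewrite IHs // big_cons -!EFinD; congr EFin; ring.
Qed.

Lemma integral_run_cost rho k a w : 0 <= w ->
  (\int[mu]_(u in `[a, (a + w)%R[) (run_cost (k, (a, w)) rho u)%:E =
   (w * beh_cost cost step k rho)%:E)%E.
Proof.
elim: rho k a w => [|r rho IH] k a w w0; first by rewrite /= mulr0 integral0.
have [sw s1] := step_weights k r.
have -> : a + w = a + w * \sum_(q <- step k r) q.1 by rewrite s1 mulr1.
exact: integral_select_cost.
Qed.

Variables (s0 : X) (m0 : M).

Definition start_state : state := ((s0, m0), (0, 1)).

Definition run_state (u : R) (h : seq Rq) : state :=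
  foldl (fun st r => advance st r u) start_state h.

Definition run_alg (u : R) : det_alg X Rq := fun h => (run_state u h).1.1.

Lemma det_cost_run_alg u rho : det_cost cost s0 (run_alg u) rho = run_cost start_state rho u.
Proof.
suff gen h : det_cost_from cost (run_alg u) h (run_alg u h) rho = run_cost (run_state u h) rho u.
  exact: (gen [::]).
elim: rho h => [|r rho IH] h //=.
by rewrite IH /run_alg /run_state foldl_rcons.
Qed.

End BehavioralToRandomized.

Lemma behavioral_to_randdet (R : realType) (X Rq : Type) (cost : X -> Rq -> X -> R)
    (s0 : X) (C : R) :
  (forall u r v, 0 <= cost u r v) ->
  behavioral_competitive cost s0 C -> randdet_competitive cost s0 C.
Proof.
move=> cost_ge0 [M [m0 [step [step_weights [K HK]]]]].
have mrun rho := measurable_run_cost cost step rho (start_state R s0 m0).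
exists _, _, (uniform_prob (@ltr01 R)), (run_alg step s0 m0); split.
  move=> rho; have -> : (fun u => det_cost cost s0 (run_alg step s0 m0 u) rho) =
    run_cost cost step (start_state R s0 m0) rho by apply/funext => u; rewrite det_cost_run_alg.
  exact: mrun.
exists K => rho; under eq_integral do rewrite det_cost_run_alg.
rewrite integral_uniform //; last 2 first.
- by apply/measurable_EFinP; exact: mrun.
- by move=> u; rewrite lee_fin run_cost_ge0.
rewrite subr0 invr1 mul1e -integral_itv_bndo_bndc; last first.
  by apply/measurable_EFinP/(measurable_funS measurableT (@subsetT _ _)); exact: mrun.
have := integral_run_cost cost_ge0 step_weights rho (s0, m0) 0 ler01.
by rewrite add0r => ->; rewrite lee_fin mul1r HK.
Qed.

Theorem mainTheorem3 (R : realType) (X Rq : Type) (s0 : X)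
    (d : X -> X -> R) (cost : X -> Rq -> X -> R) (C : R) :
  online_problem d cost -> 0 <= C ->
  mixed_competitive cost s0 C ->
  [/\ randdet_competitive cost s0 C,
      behavioral_competitive cost s0 C &
      distributional_competitive cost s0 C].
Proof.
move=> [_ _ _ cost_ge0 _] _ /(mixed_to_behavioral cost_ge0) beh.
split; [exact: behavioral_to_randdet | exact: beh | exact: behavioral_to_distributional].
Qed.
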